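(* Let $k>0$ and $j\ge 0$ be integers and let $p\in\mathbb{C}[z,z^{-1},u]$. Let $\min_u$ be the minimal degree in $u$ of a monomial of $p$ and $\max_z$ the maximal degree in $z$ of a monomial of $p$ (if $p=0$, set $\min_u:=0$ and $\max_z:=-\infty$, so that $\max\{\max_z,0\}=0$). Let $E$ be the rank-$2$ holomorphic vector bundle on $Z_k$ with transition matrix $T=\begin{pmatrix} z^j & p(z,u)\\ 0 & z^{-j}\end{pmatrix}$ from $U$ to $V$. Let $(a,b)$ be a section of $E$ over $U$, with $a=\sum_{r,s\ge0}a_{rs}z^su^r$ and $b=\sum_{r,s\ge0}b_{rs}z^su^r$ holomorphic on $U$, such that both $z^ja+pb$ and $z^{-j}b$ are holomorphic functions of $(z^{-1},z^ku)$. Then for every $r\ge\min_u$, if $a_{rs}\neq0$ then \[0\le s\le \max\bigl\{k(r-\min_u)+j+\max\{\max_z,0\},\ kr-j\bigr\}.\]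
   Context: $Z_k$ denotes the total space of the line bundle $\mathcal{O}_{\mathbb{P}^1}(-k)$, covered by two charts $U\cong\mathbb{C}^2$ with coordinates $(z,u)$ and $V\cong\mathbb{C}^2$ with coordinates $(w,v)$, glued on $U\cap V=\{z\neq0\}$ by $w=z^{-1}$, $v=z^ku$. A holomorphic function on $U\cap V$ with Laurent expansion $\sum c_{rs}z^su^r$ is holomorphic in $(z^{-1},z^ku)$, i.e. extends holomorphically to $V$, exactly when $c_{rs}=0$ whenever $s>kr$. Sections over $U$ of the bundle with transition matrix $T$ are pairs $(a,b)$ of holomorphic functions on $U$; such a section extends over $V$ iff $\binom{z^ja+pb}{z^{-j}b}$ extends holomorphically to $V$. *)

From HB Require Import structures.
From mathcomp Require Import all_boot all_order all_algebra.
From mathcomp Require Import complex.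
From mathcomp Require Import reals Rstruct.
Set Implicit Arguments. Unset Strict Implicit. Unset Printing Implicit Defensive.
Import Order.TTheory GRing.Theory Num.Theory.
Local Open Scope ring_scope.

Definition C : Type := (Rdefinitions.R)[i].

(* A holomorphic function on U = C^2 with coordinates (z,u) is given by its
   power series  sum_{r,s>=0} a r s * z^s u^r  (a r s = coefficient of z^s u^r),
   which must converge absolutely on all of C^2 (entire). *)
Definition entire2 (a : nat -> nat -> C) : Prop :=
  forall rho : C, 0 < rho -> exists M : C, forall N : nat,
    \sum_(r < N) \sum_(s < N) `|a r s| * rho ^+ (r + s) <= M.

Definition zcoef (a : nat -> nat -> C) (r : nat) (s : int) : C :=
  match s with Posz n => a r n | Negz _ => 0 end.

(* A Laurent polynomial p in C[z,z^-1,u] is given by its coefficient function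
   p n m = coefficient of z^n u^m (n : int, m : nat), together with a bound N
   on its support: p n m <> 0 -> |n| <= N /\ m <= N. *)
Definition lpoly_support_bound (p : int -> nat -> C) (N : nat) : Prop :=
  forall (n : int) (m : nat), p n m != 0 -> (`|n| <= N)%N /\ (m <= N)%N.

(* Coefficient of z^S u^R in the product p * b, for p supported in the box
   [-N, N] x [0, N] (finite sum; independent of N once N bounds the support). *)
Definition prod_coef (p : int -> nat -> C) (N : nat) (b : nat -> nat -> C)
    (R : nat) (S : int) : C :=
  \sum_(m < N.+1 | (m <= R)%N) \sum_(i < (N + N).+1)
     p (i%:Z - N%:Z) m * zcoef b (R - m) (S - (i%:Z - N%:Z)).

(* Extension criterion from the context: a holomorphic function on U cap V with
   Laurent expansion sum c r s z^s u^r extends holomorphically to V iff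
   c r s = 0 whenever s > k r. *)
Definition extends_to_V (k : nat) (c : nat -> int -> C) : Prop :=
  forall (r : nat) (s : int), (k%:Z * r%:Z < s) -> c r s = 0.

Definition is_min_u (p : int -> nat -> C) (mu : nat) : Prop :=
  ((forall n m, p n m = 0) -> mu = 0%N) /\
  ((exists n m, p n m != 0) ->
     (exists n, p n mu != 0) /\ (forall n m, p n m != 0 -> (mu <= m)%N)).

Definition is_max_z (p : int -> nat -> C) (mz : int) : Prop :=
  (exists m, p mz m != 0) /\ (forall n m, p n m != 0 -> n <= mz).

Definition is_max_z_pos (p : int -> nat -> C) (mz0 : int) : Prop :=
  ((forall n m, p n m = 0) -> mz0 = 0) /\
  ((exists n m, p n m != 0) -> exists mz, is_max_z p mz /\ mz0 = Num.max mz 0).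

(* If a_{rs} <> 0 with s above both bounds, then s + j > k r, so the
   coefficient of z^{s+j} u^r in z^j a + p b vanishes and a_{rs} equals minus
   the corresponding coefficient of p b.  Every term p_{nm} b_{r-m, s+j-n} of
   the latter has m >= min_u and n <= max{max_z, 0}, so the z-degree s + j - n
   of b exceeds k (r - m) + j; such coefficients of b vanish because z^{-j} b
   extends to V.  Hence a_{rs} = 0. *)
From HB Require Import structures.
From mathcomp Require Import all_boot all_order all_algebra.
From mathcomp Require Import complex.
From mathcomp Require Import reals Rstruct.
From mathcomp Require Import zify.
Import Order.TTheory GRing.Theory Num.Theory.
Local Open Scope ring_scope.

Lemma zcoef_eq0_of_extends_shift {k j : nat} {b : nat -> nat -> C}
    {r : nat} {t : int} :
  extends_to_V k (fun r s => zcoef b r (s + j%:Z)) ->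
  k%:Z * r%:Z + j%:Z < t -> zcoef b r t = 0.
Proof.
move=> hext ht; have := hext r (t - j%:Z).
by rewrite subrK; apply; rewrite ltrBrDr.
Qed.

Lemma prod_coef_eq0 (p : int -> nat -> C) (N : nat) (b : nat -> nat -> C)
    (R : nat) (S : int) :
  (forall n m, p n m != 0 -> (m <= R)%N -> zcoef b (R - m) (S - n) = 0) ->
  prod_coef p N b R S = 0.
Proof.
move=> hb; apply: big1 => m hm; apply: big1 => i _.
have [->|pnz] := eqVneq (p (i%:Z - N%:Z) m) 0; first by rewrite mul0r.
by rewrite hb ?mulr0.
Qed.

Lemma min_u_le {p : int -> nat -> C} {mu : nat} {n : int} {m : nat} :
  is_min_u p mu -> p n m != 0 -> (mu <= m)%N.
Proof.
move=> [_ hmu] pnz; have [_ hle] := hmu (ex_intro _ n (ex_intro _ m pnz)).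
exact: hle pnz.
Qed.

Lemma max_z_pos_ge {p : int -> nat -> C} {mz0 : int} {n : int} {m : nat} :
  is_max_z_pos p mz0 -> p n m != 0 -> n <= mz0.
Proof.
move=> [_ hmz0] pnz.
have [mz [[_ hmz] ->]] := hmz0 (ex_intro _ n (ex_intro _ m pnz)).
by rewrite le_max (hmz _ _ pnz).
Qed.

Theorem mainTheorem4 (k j : nat) (hk : (0 < k)%N)
  (p : int -> nat -> C) (N : nat) (hN : lpoly_support_bound p N)
  (mu : nat) (hmu : is_min_u p mu) (mz0 : int) (hmz0 : is_max_z_pos p mz0)
  (a b : nat -> nat -> C) (ha : entire2 a) (hb : entire2 b)
  (hext1 : extends_to_V k
     (fun r s => zcoef a r (s - j%:Z) + prod_coef p N b r s))
  (hext2 : extends_to_V k (fun r s => zcoef b r (s + j%:Z))) :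
  forall r s : nat, (mu <= r)%N -> a r s != 0 ->
    0 <= s%:Z /\
    s%:Z <= Num.max (k%:Z * (r%:Z - mu%:Z) + j%:Z + mz0) (k%:Z * r%:Z - j%:Z).
Proof.
move=> r s hr ars; split; first by [].
rewrite leNgt; apply/negP; rewrite gt_max => /andP[hs_mu hs_j].
have hpb : prod_coef p N b r (s%:Z + j%:Z) = 0.
  apply: prod_coef_eq0 => n m pnz hm; apply: (zcoef_eq0_of_extends_shift hext2).
  have hn := max_z_pos_ge hmz0 pnz.
  have hkm : k%:Z * (r - m)%N%:Z <= k%:Z * (r%:Z - mu%:Z).
    by rewrite ler_wpM2l //; have := min_u_le hmu pnz; lia.
  lia.
have hsj : k%:Z * r%:Z < s%:Z + j%:Z by lia.
by move: (hext1 r _ hsj) ars; rewrite hpb addr0 addrK /= => ->; rewrite eqxx.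
Qed.
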